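(* Let $\tau_n\in\Gamma_n$ be a fixed rooted planar tree, let $\ell_n$ be a uniformly random admissible labeling of $\tau_n$, and let $(S^{\tau_n}_m)_{m=0}^n$ be the conditioned walk defined below. Then $$\big(S^{\tau_n}_m\big)_{m=0}^n\overset{d}{=}\big(\ell_n(c_m)\big)_{m=0}^n .$$
   Context: A rooted planar tree is a finite rooted plane (ordered) tree; $\Gamma_n$ is the set of rooted planar trees with $n$ edges. Vertices at even distance from the root (including the root) are white, those at odd distance are black; $V^\bullet(\tau)$ denotes the black vertices. For a black vertex $u$ of degree $k$ (number of neighbours), let $u_0$ be its parent and $u_1,\dots,u_{k-1}$ its children in clockwise order, $u_k=u_0$. An admissible labeling is a map $\ell$ from the white vertices to $\mathbb Z$ with $\ell(\text{root})=0$ and $\ell(u_{j+1})\ge \ell(u_j)-1$ for every black $u$ and $0\le j\le k-1$. White contour sequence: the clockwise contour walk around $\tau_n$ from the root has $2n$ steps alternately visiting white and black vertices; $c_m$ is the white vertex visited at step $2m$, $m=0,\dots,n$. For black $v$, $B_v\subseteq\{1,\dots,n\}$ is the set of $i$ such that the contour walk passes through $v$ between its visits to $c_{i-1}$ and $c_i$. Let $\xi_i$ be i.i.d. with $\mathbb P(\xi_1=i)=2^{-i-2}$, $i\ge-1$; $S_m=\sum_{i\le m}\xi_i$, $S_B=\sum_{i\in B}\xi_i$; $(S^{\tau_n}_m)_{m=0}^n$ has the law of $(S_m)_{m=0}^n$ conditioned on $\{S_{B_v}=0\ \forall v\in V^\bullet(\tau_n)\}$. *)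

From Stdlib Require Import Reals List ZArith Arith Lia.
Import ListNotations.
Open Scope R_scope.

Inductive tree : Type := Node : list tree -> tree.

Fixpoint edges (t : tree) : nat :=
  match t with Node ts => list_sum (map (fun c => S (edges c)) ts) end.

(* vertices are addressed by paths from the root: list of child indices
   (0-based, in clockwise/planar order). [sub t p] is the subtree at p. *)
Fixpoint sub (t : tree) (p : list nat) : option tree :=
  match p with
  | [] => Some t
  | i :: p' => match t with Node ts =>
      match nth_error ts i with Some c => sub c p' | None => None end end
  end.

Definition is_vertex (t : tree) (v : list nat) : Prop := sub t v <> None.
Definition is_white (t : tree) (v : list nat) : Prop :=
  is_vertex t v /\ Nat.even (length v) = true.
Definition is_black (t : tree) (v : list nat) : Prop :=
  is_vertex t v /\ Nat.odd (length v) = true.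

(* clockwise contour walk of the subtree t rooted at path p:
   visits 2*edges t + 1 vertices, starting and ending at p *)
Fixpoint contour (t : tree) (p : list nat) : list (list nat) :=
  match t with Node ts =>
    p :: (fix go (cs : list tree) (i : nat) : list (list nat) :=
            match cs with
            | [] => []
            | c :: cs' => contour c (p ++ [i]) ++ [p] ++ go cs' (S i)
            end) ts 0%nat
  end.

Definition cstep (t : tree) (k : nat) : list nat := nth k (contour t []) [].

(* white contour sequence c_0, ..., c_n *)
Definition cseq (t : tree) : list (list nat) :=
  map (fun m => cstep t (2 * m)%nat) (seq 0%nat (S (edges t))).

(* Admissible labelings.  A labeling is a map from the white vertices to Z;
   we represent it by a function on paths which is 0 outside the white vertices. *)
Definition admissible (t : tree) (l : list nat -> Z) : Prop :=
  l [] = 0%Z /\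
  (forall v, ~ is_white t v -> l v = 0%Z) /\
  (forall u ts, Nat.odd (length u) = true -> sub t u = Some (Node ts) ->
     (* u_0 = parent, u_j = j-th child (j = 1..k-1), u_k = u_0, k = length ts + 1 *)
     let w := fun j => if orb (j =? 0)%nat (j =? S (length ts))%nat then removelast u
                       else u ++ [(j - 1)%nat] in
     forall j, (j < S (length ts))%nat -> (l (w (S j)) >= l (w j) - 1)%Z).

Definition has_card {A : Type} (P : A -> Prop) (k : nat) : Prop :=
  exists s : list A, NoDup s /\ length s = k /\ forall a, In a s <-> P a.

Definition pxi (z : Z) : R :=
  if (z <? -1)%Z then 0 else (/ 2) ^ (Z.to_nat (z + 2)).

Definition pmf (xi : list Z) : R := fold_right (fun z acc => pxi z * acc) 1 xi.

Fixpoint psums (acc : Z) (xi : list Z) : list Z :=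
  acc :: match xi with [] => [] | z :: r => psums (acc + z) r end.
Definition walk (xi : list Z) : list Z := psums 0%Z xi.

(* S_{B_v} = sum of xi_i over i in B_v, where
   B_v = { i in 1..n : the contour walk is at v at step 2i-1 } *)
Definition blocksum (t : tree) (xi : list Z) (v : list nat) : Z :=
  fold_right Z.add 0%Z
    (map (fun i => if list_eq_dec Nat.eq_dec (cstep t (2 * i - 1)%nat) v
                   then nth (i - 1)%nat xi 0%Z else 0%Z)
         (seq 1%nat (edges t))).

(* conditioning event { S_{B_v} = 0 for all black v } (every vertex occurs in the contour) *)
Definition cond_event (t : tree) (xi : list Z) : bool :=
  forallb (fun v => if Nat.odd (length v) then Z.eqb (blocksum t xi v) 0 else true)
          (contour t []).

Fixpoint box (n N : nat) : list (list Z) :=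
  match n with
  | O => [[]]
  | S n' => flat_map (fun z => map (cons z) (box n' N))
                     (map (fun k => (Z.of_nat k - Z.of_nat N)%Z) (seq 0%nat (2 * N + 1)%nat))
  end.

(* [prob n A p]: the event A (on (xi_1..xi_n) in Z^n) has probability p, i.e.
   the series of pmf over A (exhausted by boxes [-N,N]^n) converges to p *)
Definition prob (n : nat) (A : list Z -> bool) (p : R) : Prop :=
  Un_cv (fun N => fold_right Rplus 0
                    (map (fun xi => if A xi then pmf xi else 0) (box n N))) p.

Definition list_Z_eqb (x y : list Z) : bool :=
  if list_eq_dec Z.eq_dec x y then true else false.

From Stdlib Require Import Reals List ZArith Lia Lra Arith Bool.
From Stdlib Require Import FunctionalExtensionality.
Import ListNotations.
Open Scope R_scope.

(* Read the contour walk of [t] two steps at a time: its [n] "steps"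
   go from a white vertex [c_(m-1)] through a black vertex to the white vertex [c_m].
   Listing these steps recursively ([wsteps]) gives the contour itself, so [c_m] is
   the target of the m-th step and [B_v] is the set of steps passing through [v].

   A vector [xi] of n integers is then read as the increments of a labeling along
   the steps ([fits]).  Since the steps around one black vertex form a closed cycle,
   every labeling has zero increment sums over the blocks [B_v]; conversely, if all
   block sums vanish, [xi] is the increment vector of a (unique, root-normalised)
   labeling ([fits_of_blocksums]).  The admissibility constraints are exactly the
   constraints [xi_i >= -1] on the increments, and the walk [S] of [xi] lists the
   labels [l(c_m)].  This gives a bijection between admissible labelings and the
   vectors of the conditioning event with all [xi_i >= -1].

   Finally, on the conditioning event [sum xi = 0], so every such vector has the same
   mass [2^(-2n)] under the law of [xi], and it lies in the box [[-n,n]^n]; hence the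
   probabilities of the conditioning event and of [{S = x}] inside it are [2^(-2n)]
   times the corresponding numbers of labelings, and their ratio is the uniform law. *)

Record step : Type := Step { s_from : list nat; s_black : list nat; s_to : list nat }.

(* The steps around the black vertex [q] with parent [par], starting at its child
   number [j] and coming from the white vertex [prev]; [sub_steps] lists the steps
   inside the subtree of a white child. *)
Fixpoint round_with (sub_steps : tree -> list nat -> list step)
    (q par : list nat) (ws : list tree) (j : nat) (prev : list nat) : list step :=
  match ws with
  | [] => [Step prev q par]
  | w :: ws' => Step prev q (q ++ [j]) :: sub_steps w (q ++ [j])
                ++ round_with sub_steps q par ws' (S j) (q ++ [j])
  end.

Fixpoint children_with (black_steps : tree -> list nat -> list nat -> list step)
    (p : list nat) (cs : list tree) (i : nat) : list step :=
  match cs with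
  | [] => []
  | c :: cs' => black_steps c (p ++ [i]) p ++ children_with black_steps p cs' (S i)
  end.

Fixpoint wsteps (T : tree) (p : list nat) : list step :=
  match T with Node ts =>
    children_with (fun c q par => match c with Node ws => round_with wsteps q par ws 0 par end)
      p ts 0
  end.

Notation round := (round_with wsteps).

Definition bsteps (T : tree) (q par : list nat) : list step :=
  match T with Node ws => round q par ws 0 par end.

Notation child_steps := (children_with bsteps).

Lemma wsteps_node ts p : wsteps (Node ts) p = child_steps p ts 0.
Proof. reflexivity. Qed.

Fixpoint tree_ind2 (P : tree -> Prop) (H : forall ts, Forall P ts -> P (Node ts)) (t : tree) : P t
  :=
  match t with Node ts => H ts ((fix f (l : list tree) : Forall P l :=
     match l with [] => Forall_nil P | c :: cs => Forall_cons c (tree_ind2 P H c) (f cs) end) ts)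
         end.

Fixpoint child_contour (p : list nat) (cs : list tree) (i : nat) : list (list nat) :=
  match cs with [] => [] | c :: cs' => contour c (p ++ [i]) ++ [p] ++ child_contour p cs' (S i) end.

Lemma contour_node ts p : contour (Node ts) p = p :: child_contour p ts 0.
Proof.
  simpl. f_equal. generalize 0%nat. induction ts as [|c cs IH]; intro i; [reflexivity|].
  simpl. f_equal. f_equal. apply IH.
Qed.

Definition visits (L : list step) : list (list nat) := flat_map (fun tr => [s_black tr; s_to tr]) L.

Lemma contour_steps : forall T, (forall p, contour T p = p :: visits (wsteps T p)) /\
  (forall q par, contour T q ++ [par] = visits (bsteps T q par)).
Proof.
  apply tree_ind2. intros ts H. split.
  - intro p. rewrite contour_node, wsteps_node. f_equal. generalize 0%nat.
    induction H as [|c cs [_ Hc] _ IH]; intro k; [reflexivity|].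
    simpl. unfold visits in *. rewrite flat_map_app. rewrite <- Hc, <- IH.
    now rewrite <- app_assoc.
  - intros q par. rewrite contour_node. simpl bsteps.
    enough (forall k prev, visits (round q par ts k prev) = q :: child_contour q ts k ++ [par]) by
        auto.
    induction H as [|c cs [Hc _] _ IH]; intros k prev; [reflexivity|].
    simpl. unfold visits in *. rewrite flat_map_app. rewrite Hc. simpl. rewrite IH.
    f_equal. rewrite <- !app_assoc. reflexivity.
Qed.

Section StepStructure.
Local Open Scope nat_scope.

Fixpoint round_open (q : list nat) (ws : list tree) (j : nat) (prev : list nat) : list step :=
  match ws with
  | [] => []
  | w :: ws' => Step prev q (q ++ [j]) :: wsteps w (q ++ [j]) ++ round_open q ws' (S j) (q ++ [j])
  end.

Fixpoint round_last (q : list nat) (ws : list tree) (j : nat) (prev : list nat) : list nat :=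
  match ws with [] => prev | _ :: ws' => round_last q ws' (S j) (q ++ [j]) end.

Lemma round_split q par ws j prev : round q par ws j prev = round_open q ws j prev ++
  [Step (round_last q ws j prev) q par].
Proof.
  revert j prev; induction ws; intros; simpl; [reflexivity|]. rewrite IHws. now rewrite app_assoc.
Qed.

Fixpoint chained (s : list nat) (L : list step) : Prop :=
  match L with [] => True | tr :: r => s_from tr = s /\ chained (s_to tr) r end.

Fixpoint chain_end (s : list nat) (L : list step) : list nat :=
  match L with [] => s | tr :: r => chain_end (s_to tr) r end.

Lemma chained_app s L1 L2 : chained s (L1 ++ L2) <-> chained s L1 /\ chained (chain_end s L1) L2.
Proof. revert s; induction L1; intros; simpl; [tauto|]. rewrite IHL1. tauto. Qed.

Lemma chain_end_app s L1 L2 : chain_end s (L1 ++ L2) = chain_end (chain_end s L1) L2.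
Proof. revert s; induction L1; intros; simpl; auto. Qed.

Lemma steps_chained : forall T, (forall p, chained p (wsteps T p) /\ chain_end p (wsteps T p) = p)
  /\
  (forall q par, chained par (bsteps T q par) /\ chain_end par (bsteps T q par) = par).
Proof.
  apply tree_ind2. intros ts H. split.
  - intro p. rewrite wsteps_node. generalize 0%nat.
    induction H as [|c cs [_ Hc] _ IH]; intro k; simpl; [tauto|].
    rewrite chained_app, chain_end_app. destruct (Hc (p ++ [k]) p) as [H1 H2]. rewrite H2.
    destruct (IH (S k)). tauto.
  - intros q par. simpl bsteps.
    enough (forall k prev, chained prev (round q par ts k prev) /\
        chain_end prev (round q par ts k prev) = par) by auto.
    induction H as [|c cs [Hc _] _ IH]; intros k prev; simpl; [tauto|].
    rewrite chained_app, chain_end_app. destruct (Hc (q ++ [k])) as [H1 H2]. rewrite H2.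
    destruct (IH (S k) (q ++ [k])). tauto.
Qed.

Lemma steps_length : forall T, (forall p, length (wsteps T p) = edges T) /\
  (forall q par, length (bsteps T q par) = S (edges T)).
Proof.
  apply tree_ind2. intros ts H. split.
  - intro p. rewrite wsteps_node. simpl edges. generalize 0%nat.
    induction H as [|c cs [_ Hc] _ IH]; intro k; simpl; [reflexivity|].
    rewrite length_app, Hc, IH. reflexivity.
  - intros q par. simpl bsteps. simpl edges.
    enough (forall k prev, length (round q par ts k prev) = S
        (list_sum (map (fun c => S (edges c)) ts))) by auto.
    induction H as [|c cs [Hc _] _ IH]; intros k prev; simpl; [reflexivity|].
    rewrite length_app, Hc, IH. lia.
Qed.

Definition below (q : list nat) (k : nat) (v : list nat) : Prop :=
  exists j r, (k <= j)%nat /\ v = q ++ [j] ++ r.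

Lemma steps_black_below : forall T, (forall p tr, In tr (wsteps T p) -> exists r, r <> [] /\
  s_black tr = p ++ r) /\
  (forall q par tr, In tr (bsteps T q par) -> exists r, s_black tr = q ++ r).
Proof.
  apply tree_ind2. intros ts H. split.
  - intro p. rewrite wsteps_node. generalize 0%nat.
    induction H as [|c cs [_ Hc] _ IH]; intros k tr Hin; simpl in Hin; [contradiction|].
    apply in_app_iff in Hin as [Hin|Hin].
    + destruct (Hc _ _ _ Hin) as [r Hr]. exists ([k] ++ r). split; [discriminate|].
      rewrite Hr. now rewrite app_assoc.
    + eauto.
  - intros q par. simpl bsteps.
    enough (forall k prev tr, In tr (round q par ts k prev) -> exists r, s_black tr = q ++ r) by
        eauto.
    induction H as [|c cs [Hc _] _ IH]; intros k prev tr Hin; simpl in Hin.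
    + destruct Hin as [<-|[]]. exists []. simpl. now rewrite app_nil_r.
    + destruct Hin as [<-|Hin]. { exists []. simpl. now rewrite app_nil_r. }
      apply in_app_iff in Hin as [Hin|Hin].
      * destruct (Hc _ _ Hin) as [r [_ Hr]]. exists ([k] ++ r). rewrite Hr. now rewrite app_assoc.
      * eauto.
Qed.

Lemma child_steps_black p ts k tr : In tr (child_steps p ts k) -> exists i r, (k <= i)%nat /\
  s_black tr = p ++ [i] ++ r.
Proof.
  revert k. induction ts as [|c cs IH]; intros k Hin; simpl in Hin; [contradiction|].
  apply in_app_iff in Hin as [Hin|Hin].
  - destruct (proj2 (steps_black_below c) _ _ _ Hin) as [r Hr]. exists k, r. split; [lia|].
    rewrite Hr. now rewrite app_assoc.
  - destruct (IH _ Hin) as [i [r [H1 H2]]]. exists i, r. split; [lia|auto].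
Qed.

Lemma round_open_black q ws k prev tr : In tr (round_open q ws k prev) ->
  s_black tr = q \/ exists j r, (k <= j)%nat /\ r <> [] /\ s_black tr = q ++ [j] ++ r.
Proof.
  revert k prev. induction ws as [|c cs IH]; intros k prev Hin; simpl in Hin; [contradiction|].
  destruct Hin as [<-|Hin]; [now left|].
  apply in_app_iff in Hin as [Hin|Hin].
  - destruct (proj1 (steps_black_below c) _ _ Hin) as [r [Hr1 Hr]]. right. exists k, r.
    split; [lia|]. split; auto. rewrite Hr. now rewrite app_assoc.
  - destruct (IH _ _ Hin) as [H|[j [r [H1 H2]]]]; [now left|]. right. exists j, r. split;
      [lia|auto].
Qed.

Lemma steps_whites_below : forall T,
  (forall p tr, In tr (wsteps T p) -> (exists r, s_from tr = p ++ r) /\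
      (exists r, s_to tr = p ++ r)) /\
  (forall q par tr, In tr (bsteps T q par) ->
     (s_from tr = par \/ exists r, s_from tr = q ++ r) /\
         (s_to tr = par \/ exists r, s_to tr = q ++ r)).
Proof.
  apply tree_ind2. intros ts H. split.
  - intro p. rewrite wsteps_node. generalize 0%nat.
    induction H as [|c cs [_ Hc] _ IH]; intros k tr Hin; simpl in Hin; [contradiction|].
    apply in_app_iff in Hin as [Hin|Hin]; [|eauto].
    destruct (Hc _ _ _ Hin) as [[H1|[r1 H1]] [H2|[r2 H2]]];
      (split; [try (exists []; rewrite H1; now rewrite app_nil_r);
               exists ([k] ++ r1); rewrite H1; now rewrite app_assoc|
               try (exists []; rewrite H2; now rewrite app_nil_r);
               exists ([k] ++ r2); rewrite H2; now rewrite app_assoc]).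
  - intros q par. simpl bsteps.
    assert (Hp : par = par \/ exists r, par = q ++ r) by now left.
    revert Hp.
    enough (forall k prev, (prev = par \/ exists r, prev = q ++ r) -> forall tr,
        In tr (round q par ts k prev) ->
     (s_from tr = par \/ exists r, s_from tr = q ++ r) /\
         (s_to tr = par \/ exists r, s_to tr = q ++ r)) by eauto.
    induction H as [|c cs [Hc _] _ IH]; intros k prev Hprev tr Hin; simpl in Hin.
    + destruct Hin as [<-|[]]. simpl. auto.
    + destruct Hin as [<-|Hin]. { simpl. split; auto. right. exists [k]. reflexivity. }
      apply in_app_iff in Hin as [Hin|Hin].
      * destruct (Hc _ _ Hin) as [[r1 H1] [r2 H2]].
        split; right; [exists ([k] ++ r1); rewrite H1|exists ([k] ++ r2); rewrite H2];
            now rewrite app_assoc.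
      * apply (IH (S k) (q ++ [k])); auto. right. exists [k]. reflexivity.
Qed.

Lemma child_steps_whites p ts k tr : In tr (child_steps p ts k) ->
  (s_from tr = p \/ below p k (s_from tr)) /\ (s_to tr = p \/ below p k (s_to tr)).
Proof.
  revert k. induction ts as [|c cs IH]; intros k Hin; simpl in Hin; [contradiction|].
  apply in_app_iff in Hin as [Hin|Hin].
  - destruct (proj2 (steps_whites_below c) _ _ _ Hin) as [[H1|[r1 H1]] [H2|[r2 H2]]];
    split; (try now left); right;
      first [exists k, r1; rewrite H1; (split; [lia| now rewrite app_assoc])
            |exists k, r2; rewrite H2; (split; [lia| now rewrite app_assoc])].
  - destruct (IH _ Hin) as [[H1|[j1 [r1 [Hj1 H1]]]] [H2|[j2 [r2 [Hj2 H2]]]]];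
    split; (try now left); right;
      first [exists j1, r1; split; [lia|assumption] | exists j2, r2; split; [lia|assumption]].
Qed.

Lemma round_open_whites q ws k prev tr : In tr (round_open q ws k prev) ->
  (s_from tr = prev \/ below q k (s_from tr)) /\ (s_to tr = prev \/ below q k (s_to tr)).
Proof.
  revert k prev. induction ws as [|c cs IH]; intros k prev Hin; simpl in Hin; [contradiction|].
  destruct Hin as [<-|Hin].
  { simpl. split; [now left|]. right. exists k, []. split; [lia|reflexivity]. }
  apply in_app_iff in Hin as [Hin|Hin].
  - destruct (proj1 (steps_whites_below c) _ _ Hin) as [[r1 H1] [r2 H2]].
    split; right; [exists k, r1; rewrite H1|exists k, r2; rewrite H2];
        (split; [lia| now rewrite app_assoc]).
  - destruct (IH _ _ Hin) as [[H1|[j1 [r1 [Hj1 H1]]]] [H2|[j2 [r2 [Hj2 H2]]]]];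
    split; right;
      first [ exists k, []; split; [lia|]; assumption
            | exists j1, r1; split; [lia|assumption]
            | exists j2, r2; split; [lia|assumption] ].
Qed.
End StepStructure.

Section Increments.
Local Open Scope Z_scope.

Definition path_dec := list_eq_dec Nat.eq_dec.

Fixpoint bsum (L : list step) (y : list Z) (v : list nat) : Z :=
  match L, y with
  | tr :: L', z :: y' => (if path_dec (s_black tr) v then z else 0) + bsum L' y' v
  | _, _ => 0 end.

Definition bincr (l : list nat -> Z) (v : list nat) (L : list step) : Z :=
  fold_right Z.add 0
    (map (fun tr => if path_dec (s_black tr) v then l (s_to tr) - l (s_from tr) else 0) L).

Definition fits (l : list nat -> Z) (L : list step) (y : list Z) : Prop :=
  Forall2 (fun tr z => l (s_to tr) - l (s_from tr) = z) L y.

Lemma bincr_app l v L1 L2 : bincr l v (L1 ++ L2) = bincr l v L1 + bincr l v L2.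
Proof.
  unfold bincr. rewrite map_app, fold_right_app. induction L1; simpl; [reflexivity|].
  rewrite IHL1. lia.
Qed.

Lemma bincr_cons l v tr L : bincr l v (tr :: L) =
  (if path_dec (s_black tr) v then l (s_to tr) - l (s_from tr) else 0) + bincr l v L.
Proof. reflexivity. Qed.

Lemma bsum_app L1 L2 y1 y2 v : length y1 = length L1 ->
  bsum (L1 ++ L2) (y1 ++ y2) v = bsum L1 y1 v + bsum L2 y2 v.
Proof.
  revert y1; induction L1 as [|tr L1 IH]; intros [|z y1] Hl; simpl in *; try lia.
  rewrite IH by lia. lia.
Qed.

Lemma bsum_avoiding L y v : (forall tr, In tr L -> s_black tr <> v) -> bsum L y v = 0.
Proof.
  revert y; induction L as [|tr L IH]; intros [|z y] H; simpl; auto.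
  destruct (path_dec (s_black tr) v) as [e|_]. { exfalso. apply (H tr); auto. left; auto. }
  rewrite IH; auto. intros; apply H; right; auto.
Qed.

Lemma fits_bincr l L y v : fits l L y -> bincr l v L = bsum L y v.
Proof.
  induction 1 as [|tr z L y Hz _ IH]; [reflexivity|].
  rewrite bincr_cons. simpl. rewrite IH. destruct (path_dec (s_black tr) v); lia.
Qed.

Lemma fits_app l L1 L2 y1 y2 : fits l L1 y1 -> fits l L2 y2 -> fits l (L1 ++ L2) (y1 ++ y2).
Proof. apply Forall2_app. Qed.

Lemma fits_cons l tr L z y : l (s_to tr) - l (s_from tr) = z -> fits l L y ->
  fits l (tr :: L) (z :: y).
Proof. intros; constructor; auto. Qed.

Lemma fits_ext l l' L y k : fits l L y ->
  (forall tr, In tr L -> l' (s_from tr) = l (s_from tr) + k /\ l' (s_to tr) = l (s_to tr) + k) ->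
      fits l' L y.
Proof.
  induction 1 as [|tr z L y Hz _ IH]; intros H; constructor.
  - destruct (H tr) as [H1 H2]; [left; auto|]. lia.
  - apply IH. intros; apply H; right; auto.
Qed.

Lemma split_len {A : Type} (y : list A) n1 n2 : length y = (n1 + n2)%nat ->
  exists y1 y2, y = y1 ++ y2 /\ length y1 = n1 /\ length y2 = n2.
Proof.
  intros H. exists (firstn n1 y), (skipn n1 y). rewrite firstn_skipn. split; auto.
  rewrite length_firstn, length_skipn. split; lia.
Qed.

Definition prefixb (q v : list nat) : bool :=
  if path_dec (firstn (length q) v) q then true else false.

Lemma prefixb_app q r : prefixb q (q ++ r) = true.
Proof.
  unfold prefixb. rewrite firstn_app, Nat.sub_diag, firstn_all. simpl. rewrite app_nil_r.
  destruct (path_dec q q); congruence.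
Qed.

Lemma prefixb_true q v : prefixb q v = true -> exists r, v = q ++ r.
Proof.
  unfold prefixb. destruct (path_dec (firstn (length q) v) q) as [e|]; [|discriminate].
  intros _. exists (skipn (length q) v). rewrite <- e at 1. now rewrite firstn_skipn.
Qed.

Lemma app_idx (q : list nat) k j (r1 r2 : list nat) : (q ++ [k]) ++ r1 = q ++ [j] ++ r2 -> k = j.
Proof. rewrite <- app_assoc. intro H. apply app_inv_head in H. simpl in H. congruence. Qed.

Lemma prefixb_false_idx (q : list nat) k j (r : list nat) : k <> j ->
  prefixb (q ++ [k]) (q ++ [j] ++ r) = false.
Proof.
  intros Hkj. destruct (prefixb (q ++ [k]) (q ++ [j] ++ r)) eqn:E; auto.
  apply prefixb_true in E as [r' E]. symmetry in E. apply app_idx in E. congruence.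
Qed.

(* Around each black vertex the steps form a closed cycle, so every labeling has
   zero total increment through every black vertex. *)
Lemma bincr_steps : forall T, (forall l v p, bincr l v (wsteps T p) = 0) /\
  (forall l v q par, bincr l v (bsteps T q par) = 0).
Proof.
  apply tree_ind2. intros ts H. split.
  - intros l v p. rewrite wsteps_node. generalize 0%nat.
    induction H as [|c cs [_ Hc] _ IH]; intro k; simpl; [reflexivity|].
    rewrite bincr_app, Hc, IH. reflexivity.
  - intros l v q par. simpl bsteps.
    enough (forall k prev, bincr l v (round q par ts k prev) =
      if path_dec q v then l par - l prev else 0) as E.
    { rewrite E. destruct (path_dec q v); lia. }
    induction H as [|c cs [Hc _] _ IH]; intros k prev; simpl round.
    + rewrite bincr_cons. simpl. unfold bincr; simpl. lia.
    + rewrite bincr_cons, bincr_app, Hc, IH. simpl. destruct (path_dec q v); lia.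
Qed.

Lemma bincr_round_open l v q ws k prev : bincr l v (round_open q ws k prev) =
  if path_dec q v then l (round_last q ws k prev) - l prev else 0.
Proof.
  revert k prev. induction ws as [|c cs IH]; intros k prev; simpl round_open; simpl round_last.
  - unfold bincr; simpl. destruct (path_dec q v); lia.
  - rewrite bincr_cons, bincr_app, (proj1 (bincr_steps c)), IH. simpl. destruct (path_dec q v); lia.
Qed.

Lemma bsum_split L1 L2 y1 y2 v : length y1 = length L1 ->
  (forall tr1 tr2, In tr1 L1 -> In tr2 L2 -> s_black tr1 <> s_black tr2) ->
  bsum (L1 ++ L2) (y1 ++ y2) v = 0 -> bsum L1 y1 v = 0 /\ bsum L2 y2 v = 0.
Proof.
  intros Hl Hdisj. rewrite bsum_app by exact Hl.
  destruct (in_dec path_dec v (map s_black L1)) as [Hin|Hout].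
  - apply in_map_iff in Hin as [tr1 [<- Htr1]].
    assert (bsum L2 y2 (s_black tr1) = 0) by (apply bsum_avoiding; intros tr2 Htr2 E;
        exact (Hdisj _ _ Htr1 Htr2 (eq_sym E))).
    lia.
  - assert (bsum L1 y1 v = 0) by (apply bsum_avoiding; intros tr Htr E; apply Hout, in_map_iff;
      eauto).
    lia.
Qed.

(* Gluing two labelings along a subtree: [l1] is used inside the region [inR] and [l2]
   outside, shifted so that they agree at the anchor vertex [a]. *)
Lemma fits_glue (inR : list nat -> bool) a l1 l2 L1 L2 y1 y2 :
  fits l1 L1 y1 -> fits l2 L2 y2 ->
  (forall tr, In tr L1 -> (inR (s_from tr) = true \/ s_from tr = a) /\
      (inR (s_to tr) = true \/ s_to tr = a)) ->
  (forall tr, In tr L2 -> (inR (s_from tr) = false \/ s_from tr = a) /\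
      (inR (s_to tr) = false \/ s_to tr = a)) ->
  fits (fun v => if inR v then l1 v - l1 a + l2 a else l2 v) (L1 ++ L2) (y1 ++ y2).
Proof.
  intros F1 F2 H1 H2. apply fits_app.
  - apply (fits_ext l1 _ _ _ (l2 a - l1 a) F1). intros tr Htr.
    destruct (H1 tr Htr) as [[E1|E1] [E2|E2]]; rewrite ?E1, ?E2;
      try (destruct (inR a); split; lia).
  - apply (fits_ext l2 _ _ _ 0 F2). intros tr Htr.
    destruct (H2 tr Htr) as [[E1|E1] [E2|E2]]; rewrite ?E1, ?E2;
      try (destruct (inR a); split; lia).
Qed.

Definition wsolvable (T : tree) : Prop :=
  forall p y, length y = length (wsteps T p) ->
    (forall v, bsum (wsteps T p) y v = 0) -> exists l, fits l (wsteps T p) y.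

Definition bsolvable (T : tree) : Prop :=
  forall q par y, (forall j r, par <> q ++ [j] ++ r) -> length y = length (bsteps T q par) ->
    (forall v, bsum (bsteps T q par) y v = 0) -> exists l, fits l (bsteps T q par) y.

(* At a white vertex the black children have disjoint subtrees, so solutions for the
   children glue together. *)
Lemma child_steps_solvable p ts : Forall bsolvable ts -> forall k y,
  length y = length (child_steps p ts k) ->
  (forall v, bsum (child_steps p ts k) y v = 0) -> exists l, fits l (child_steps p ts k) y.
Proof.
  induction 1 as [|c cs Hc _ IH]; intros k y Hl Hb; simpl in Hl, Hb |- *.
  - exists (fun _ => 0). destruct y; [constructor|discriminate].
  - rewrite length_app in Hl. destruct (split_len _ _ _ Hl) as [y1 [y2 [-> [Hl1 Hl2]]]].
    assert (Hdisj : forall tr1 tr2, In tr1 (bsteps c (p ++ [k]) p) ->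
              In tr2 (child_steps p cs (S k)) -> s_black tr1 <> s_black tr2).
    { intros tr1 tr2 H1 H2 E.
      destruct (proj2 (steps_black_below c) _ _ _ H1) as [r Hr].
      destruct (child_steps_black _ _ _ _ H2) as [i [r' [Hi Hr']]].
      rewrite Hr, Hr' in E. apply app_idx in E. lia. }
    destruct (Hc (p ++ [k]) p y1) as [l1 F1]; auto.
    { intros j r E. apply (f_equal (@length nat)) in E. rewrite !length_app in E. simpl in E. lia. }
    { intro v. exact (proj1 (bsum_split _ _ _ _ v Hl1 Hdisj (Hb v))). }
    destruct (IH (S k) y2) as [l2 F2]; auto.
    { intro v. exact (proj2 (bsum_split _ _ _ _ v Hl1 Hdisj (Hb v))). }
    eexists. apply (fits_glue (prefixb (p ++ [k])) p l1 l2); auto.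
    + intros tr Htr.
      destruct (proj2 (steps_whites_below c) _ _ _ Htr) as [[E1|[r1 E1]] [E2|[r2 E2]]];
        rewrite ?E1, ?E2, ?prefixb_app; auto.
    + intros tr Htr.
      destruct (child_steps_whites _ _ _ _ Htr) as
          [[E1|[j1 [r1 [Hj1 E1]]]] [E2|[j2 [r2 [Hj2 E2]]]]];
        rewrite ?E1, ?E2, ?prefixb_false_idx by lia; auto.
Qed.

Lemma round_open_disjoint c q cs k : forall tr1 tr2, In tr1 (wsteps c (q ++ [k])) ->
  In tr2 (round_open q cs (S k) (q ++ [k])) -> s_black tr1 <> s_black tr2.
Proof.
  intros tr1 tr2 H1 H2 E.
  destruct (proj1 (steps_black_below c) _ _ H1) as [r [Hr0 Hr]].
  destruct (round_open_black _ _ _ _ _ H2) as [Hq|[j [r' [Hj [_ Hr']]]]]; rewrite Hr in E.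
  - rewrite Hq in E. apply (f_equal (@length nat)) in E. rewrite !length_app in E. simpl in E. lia.
  - rewrite Hr' in E. apply app_idx in E. lia.
Qed.

Lemma wsteps_child_avoids c q k : forall tr, In tr (wsteps c (q ++ [k])) -> s_black tr <> q.
Proof.
  intros tr Htr E. destruct (proj1 (steps_black_below c) _ _ Htr) as [r [_ Hr]].
  rewrite Hr in E. apply (f_equal (@length nat)) in E. rewrite !length_app in E. simpl in E. lia.
Qed.

(* Prepending a step from a vertex [prev] not visited by [L]: the label of [prev] is
   chosen to produce the required increment. *)
Lemma fits_prepend l prev q a z L y : fits l L y -> a <> prev ->
  (forall tr, In tr L -> s_from tr <> prev /\ s_to tr <> prev) ->
  fits (fun v => if path_dec v prev then l a - z else l v) (Step prev q a :: L) (z :: y).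
Proof.
  intros F Ha HL. apply fits_cons.
  - simpl. destruct (path_dec a prev); [congruence|].
    destruct (path_dec prev prev); [lia|congruence].
  - apply (fits_ext l _ _ _ 0 F). intros tr Htr. destruct (HL tr Htr) as [H1 H2].
    destruct (path_dec (s_from tr) prev); [congruence|].
    destruct (path_dec (s_to tr) prev); [congruence|].
    split; lia.
Qed.

(* Around a black vertex [q], away from [q] itself, the white children have disjoint
   subtrees; a solution is built child by child, the step into each child being
   absorbed by the label of the vertex it comes from. *)
Lemma round_open_solvable q ts : Forall wsolvable ts -> forall k prev y,
  (forall j r, (k <= j)%nat -> prev <> q ++ [j] ++ r) ->
  length y = length (round_open q ts k prev) ->
  (forall v, v <> q -> bsum (round_open q ts k prev) y v = 0) ->
  exists l, fits l (round_open q ts k prev) y.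
Proof.
  induction 1 as [|c cs Hc _ IH]; intros k prev y Hprev Hl Hb; simpl round_open in Hl, Hb |- *.
  - exists (fun _ => 0). destruct y; [constructor|discriminate].
  - destruct y as [|z y]; [discriminate|]. simpl in Hl. rewrite length_app in Hl.
    injection Hl as Hl. destruct (split_len _ _ _ Hl) as [y1 [y2 [-> [Hl1 Hl2]]]].
    assert (Hdisj := round_open_disjoint c q cs k).
    assert (Hb' : forall v, v <> q ->
              bsum (wsteps c (q ++ [k]) ++ round_open q cs (S k) (q ++ [k])) (y1 ++ y2) v = 0).
    { intros v Hv. specialize (Hb v Hv). simpl in Hb. destruct (path_dec q v); [congruence|lia]. }
    destruct (Hc (q ++ [k]) y1) as [l1 F1]; auto.
    { intro v. destruct (path_dec v q) as [->|Hv].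
      - apply bsum_avoiding, wsteps_child_avoids.
      - exact (proj1 (bsum_split _ _ _ _ v Hl1 Hdisj (Hb' v Hv))). }
    destruct (IH (S k) (q ++ [k]) y2) as [l2 F2]; auto.
    { intros j r Hj E. rewrite <- (app_nil_r (q ++ [k])) in E. apply app_idx in E. lia. }
    { intros v Hv. exact (proj2 (bsum_split _ _ _ _ v Hl1 Hdisj (Hb' v Hv))). }
    assert (Hw : forall w, (exists r, w = (q ++ [k]) ++ r) \/ below q (S k) w -> w <> prev).
    { intros w [[r ->]|[j [r [Hj ->]]]] E.
      - rewrite <- app_assoc in E. exact (Hprev k r (le_n k) (eq_sym E)).
      - exact (Hprev j r ltac:(lia) (eq_sym E)). }
    eexists. apply fits_prepend.
    + apply (fits_glue (prefixb (q ++ [k])) (q ++ [k]) l1 l2); auto.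
      * intros tr Htr. destruct (proj1 (steps_whites_below c) _ _ Htr) as [[r1 E1] [r2 E2]].
        rewrite E1, E2, !prefixb_app. auto.
      * intros tr Htr.
        destruct (round_open_whites _ _ _ _ _ Htr) as
            [[E1|[j1 [r1 [Hj1 E1]]]] [E2|[j2 [r2 [Hj2 E2]]]]];
          rewrite ?E1, ?E2, ?prefixb_false_idx by lia; auto.
    + apply Hw. left. exists []. now rewrite app_nil_r.
    + intros tr Htr. apply in_app_iff in Htr as [Htr|Htr].
      * destruct (proj1 (steps_whites_below c) _ _ Htr) as [[r1 E1] [r2 E2]].
        split; apply Hw; left; eauto.
      * destruct (round_open_whites _ _ _ _ _ Htr) as [[E1|E1] [E2|E2]];
          split; apply Hw; rewrite ?E1, ?E2; auto; left; exists []; now rewrite app_nil_r.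
Qed.

(* At a black vertex the block sum at the vertex itself forces the return step. *)
Lemma bsteps_solvable ts : Forall wsolvable ts -> bsolvable (Node ts).
Proof.
  intros Hts q par y Hpar Hl Hb. simpl bsteps in *. rewrite round_split in *.
  rewrite length_app in Hl. simpl in Hl.
  destruct (split_len y _ 1 Hl) as [y0 [yl [-> [Hl0 Hll]]]].
  destruct yl as [|z [|]]; try discriminate.
  assert (Hbq := Hb q). rewrite bsum_app in Hbq by auto. simpl in Hbq.
  destruct (round_open_solvable q ts Hts 0 par y0) as [l Hf]; auto.
  { intros v Hv. specialize (Hb v). rewrite bsum_app in Hb by auto. simpl in Hb.
    destruct (path_dec q v); [congruence|lia]. }
  exists l. apply fits_app; auto. apply fits_cons; [|constructor]. simpl.
  assert (E := fits_bincr _ _ _ q Hf). rewrite bincr_round_open in E.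
  destruct (path_dec q q); [lia|congruence].
Qed.

Lemma fits_of_blocksums : forall T, wsolvable T /\ bsolvable T.
Proof.
  apply tree_ind2. intros ts H. split.
  - intros p y. rewrite wsteps_node. apply child_steps_solvable.
    eapply Forall_impl; [|exact H]. now intros c [_ Hb].
  - apply bsteps_solvable. eapply Forall_impl; [|exact H]. now intros c [Hw _].
Qed.

End Increments.

Section BlackNeighbours.
Local Open Scope nat_scope.

(* The neighbours [u_0, ..., u_k] of a black vertex [u] with children [ts], as in
   the definition of admissibility: [u_0 = u_k] is the parent, [u_j] the j-th child. *)
Definition bnbr (u : list nat) (ts : list tree) (j : nat) : list nat :=
  if orb (j =? 0)%nat (j =? S (length ts))%nat then removelast u else u ++ [(j - 1)%nat].

Definition around (t : tree) (tr : step) : Prop := exists ts j,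
  Nat.odd (length (s_black tr)) = true /\ sub t (s_black tr) = Some (Node ts) /\
      (j < S (length ts))%nat /\
  s_from tr = bnbr (s_black tr) ts j /\ s_to tr = bnbr (s_black tr) ts (S j).

Lemma sub_app t p r : sub t (p ++ r) = match sub t p with Some T => sub T r | None => None end.
Proof.
  revert t; induction p as [|i p IH]; intro t; [reflexivity|].
  destruct t as [ts]. simpl. destruct (nth_error ts i); auto.
Qed.

Lemma sub_child t q ts k c : sub t q = Some (Node ts) -> nth_error ts k = Some c ->
  sub t (q ++ [k]) = Some c.
Proof. intros H1 H2. rewrite sub_app, H1. simpl. now rewrite H2. Qed.

Lemma nth_error_pre {A : Type} (pre ws : list A) w : nth_error (pre ++ w :: ws) (length pre) =
  Some w.
Proof. rewrite nth_error_app2 by lia. now rewrite Nat.sub_diag. Qed.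

Lemma even_S_of_odd n : Nat.odd n = true -> Nat.even (n + 1) = true.
Proof. intros H. rewrite Nat.add_1_r, Nat.even_succ. exact H. Qed.

Lemma odd_S_of_even n : Nat.even n = true -> Nat.odd (n + 1) = true.
Proof. intros H. rewrite Nat.add_1_r, Nat.odd_succ. exact H. Qed.

Lemma bnbr_child q ws k : (k < length ws)%nat -> bnbr q ws (S k) = q ++ [k].
Proof.
  intros H. unfold bnbr. replace (S k =? 0)%nat with false by reflexivity.
  replace (S k =? S (length ws))%nat with false by (symmetry; apply Nat.eqb_neq; lia).
  simpl. now rewrite Nat.sub_0_r.
Qed.

Lemma bnbr_last q ws : bnbr q ws (S (length ws)) = removelast q.
Proof. unfold bnbr. now rewrite Nat.eqb_refl, orb_true_r. Qed.

Lemma bnbr_first q ws : bnbr q ws 0 = removelast q.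
Proof. reflexivity. Qed.

Definition waround (t T : tree) : Prop :=
  forall p, sub t p = Some T -> Nat.even (length p) = true ->
    forall tr, In tr (wsteps T p) -> around t tr.

Definition baround (t T : tree) : Prop :=
  forall q par, sub t q = Some T -> Nat.odd (length q) = true -> removelast q = par ->
    forall tr, In tr (bsteps T q par) -> around t tr.

Lemma wsteps_around t ts : Forall (baround t) ts -> waround t (Node ts).
Proof.
  intros H p Hs He. rewrite wsteps_node.
  enough (Hgen : forall pre cs, ts = pre ++ cs ->
            forall tr, In tr (child_steps p cs (length pre)) -> around t tr)
    by (apply (Hgen [] ts); reflexivity).
  intros pre cs Heq. revert pre Heq.
  induction cs as [|c cs IH]; intros pre Heq tr Hin; [contradiction|].
  simpl in Hin. apply in_app_iff in Hin as [Hin|Hin].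
  - assert (Hc : In c ts) by (rewrite Heq; apply in_or_app; right; left; auto).
    apply (proj1 (Forall_forall _ _) H c Hc (p ++ [length pre]) p); auto.
    + apply (sub_child _ _ ts); auto. rewrite Heq. apply nth_error_pre.
    + rewrite length_app. simpl. apply odd_S_of_even; auto.
    + apply removelast_last.
  - apply (IH (pre ++ [c])); [rewrite Heq, <- app_assoc; reflexivity|].
    rewrite length_app. simpl. now rewrite Nat.add_1_r.
Qed.

Lemma bsteps_around t ts : Forall (waround t) ts -> baround t (Node ts).
Proof.
  intros H q par Hs Ho Hr. simpl bsteps.
  enough (Hgen : forall pre ws prev, ts = pre ++ ws -> prev = bnbr q ts (length pre) ->
            forall tr, In tr (round q par ws (length pre) prev) -> around t tr)
    by (apply (Hgen [] ts); auto; simpl; rewrite bnbr_first; auto).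
  intros pre ws. revert pre.
  induction ws as [|c cs IH]; intros pre prev Heq Hprev tr Hin; simpl in Hin.
  - destruct Hin as [<-|[]]. exists ts, (length pre). simpl. rewrite Heq, app_nil_r in *.
    repeat split; auto. rewrite bnbr_last. auto.
  - assert (Hlt : (length pre < length ts)%nat) by (rewrite Heq, length_app; simpl; lia).
    destruct Hin as [<-|Hin].
    { exists ts, (length pre). simpl. repeat split; auto; try lia. rewrite bnbr_child; auto. }
    apply in_app_iff in Hin as [Hin|Hin].
    + assert (Hc : In c ts) by (rewrite Heq; apply in_or_app; right; left; auto).
      apply (proj1 (Forall_forall _ _) H c Hc (q ++ [length pre])); auto.
      * apply (sub_child _ _ ts); auto. rewrite Heq. apply nth_error_pre.
      * rewrite length_app. simpl. apply even_S_of_odd; auto.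
    + apply (IH (pre ++ [c]) (q ++ [length pre])).
      * rewrite Heq, <- app_assoc; reflexivity.
      * rewrite length_app. simpl. rewrite Nat.add_1_r. symmetry. apply bnbr_child; auto.
      * rewrite length_app. simpl. now rewrite Nat.add_1_r.
Qed.

Lemma steps_around t : forall T, waround t T /\ baround t T.
Proof.
  apply tree_ind2. intros ts H. split.
  - apply wsteps_around. eapply Forall_impl; [|exact H]. now intros c [_ Hb].
  - apply bsteps_around. eapply Forall_impl; [|exact H]. now intros c [Hw _].
Qed.

Lemma in_child_steps p c ts k i tr : nth_error ts i = Some c ->
  In tr (bsteps c (p ++ [k + i]) p) -> In tr (child_steps p ts k).
Proof.
  revert k i. induction ts as [|c' ts IH]; intros k i Hn Hin; [destruct i; discriminate|].
  simpl. apply in_or_app. destruct i as [|i].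
  - simpl in Hn. injection Hn as ->. left. now rewrite Nat.add_0_r in Hin.
  - right. apply (IH (S k) i); auto. now replace (S k + i)%nat with (k + S i)%nat by lia.
Qed.

Lemma in_round q par c ws k j prev tr : nth_error ws j = Some c ->
  In tr (wsteps c (q ++ [k + j])) ->
  In tr (round q par ws k prev).
Proof.
  revert k j prev. induction ws as [|c' ws IH]; intros k j prev Hn Hin; [destruct j; discriminate|].
  simpl. right. apply in_or_app. destruct j as [|j].
  - simpl in Hn. injection Hn as ->. left. now rewrite Nat.add_0_r in Hin.
  - right. apply (IH (S k) j); auto. now replace (S k + j)%nat with (k + S j)%nat by lia.
Qed.

Lemma child_in_round q par c ws k j prev : nth_error ws j = Some c ->
  In (q ++ [k + j]) (map s_to (round q par ws k prev)).
Proof.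
  revert k j prev. induction ws as [|c' ws IH]; intros k j prev Hn; [destruct j; discriminate|].
  simpl. destruct j as [|j].
  - left. now rewrite Nat.add_0_r.
  - right. rewrite map_app. apply in_or_app. right.
    replace (k + S j)%nat with (S k + j)%nat by lia. apply (IH _ _ _ Hn).
Qed.

Lemma round_complete q par ws : removelast q = par -> forall pre k prev, k = length pre ->
  prev = bnbr q (pre ++ ws) k -> forall j, (k <= j <= length (pre ++ ws))%nat ->
  In (Step (bnbr q (pre ++ ws) j) q (bnbr q (pre ++ ws) (S j))) (round q par ws k prev).
Proof.
  intros Hr. induction ws as [|w ws IH]; intros pre k prev Hk Hprev j Hj; simpl.
  - left. rewrite app_nil_r in *. assert (j = k) by lia. subst j.
    rewrite Hk, bnbr_last. congruence.
  - rewrite length_app in Hj. simpl in Hj.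
    destruct (Nat.eq_dec j k) as [->|Hne].
    + left. rewrite bnbr_child by (rewrite length_app; simpl; lia). congruence.
    + right. apply in_or_app. right.
      replace (pre ++ w :: ws) with ((pre ++ [w]) ++ ws) by (rewrite <- app_assoc; reflexivity).
      apply IH.
      * rewrite length_app. simpl. lia.
      * rewrite bnbr_child; auto. rewrite length_app, length_app. simpl. lia.
      * rewrite length_app, length_app. simpl. lia.
Qed.

Lemma steps_complete : forall T,
  (forall p r ts, Nat.odd (length r) = true -> sub T r = Some (Node ts) -> forall j,
      (j < S (length ts))%nat ->
     In (Step (bnbr (p ++ r) ts j) (p ++ r) (bnbr (p ++ r) ts (S j))) (wsteps T p)) /\
  (forall q par, removelast q = par -> forall r ts, Nat.even (length r) = true ->
      sub T r = Some (Node ts) ->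
     forall j, (j < S (length ts))%nat ->
     In (Step (bnbr (q ++ r) ts j) (q ++ r) (bnbr (q ++ r) ts (S j))) (bsteps T q par)).
Proof.
  apply tree_ind2. intros ts H. split.
  - intros p [|i r] ts' Ho Hs j Hj; [discriminate|]. simpl in Hs.
    destruct (nth_error ts i) as [c|] eqn:En; [|discriminate].
    assert (Hc : In c ts) by (eapply nth_error_In; eauto).
    destruct (proj1 (Forall_forall _ _) H c Hc) as [_ HB].
    rewrite wsteps_node. apply (in_child_steps p c ts 0 i); auto. simpl.
    replace (p ++ i :: r) with ((p ++ [i]) ++ r) by (rewrite <- app_assoc; reflexivity).
    apply HB; auto. apply removelast_last.
    simpl in Ho. now rewrite Nat.odd_succ in Ho.
  - intros q par Hr [|j0 r] ts' He Hs j Hj.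
    + simpl in Hs. injection Hs as <-. rewrite app_nil_r. simpl bsteps.
      apply (round_complete q par ts Hr [] 0 par); auto; simpl; try lia.
    + simpl in Hs. destruct (nth_error ts j0) as [c|] eqn:En; [|discriminate].
      assert (Hc : In c ts) by (eapply nth_error_In; eauto).
      destruct (proj1 (Forall_forall _ _) H c Hc) as [HW _].
      simpl bsteps. apply (in_round q par c ts 0 j0); auto. simpl.
      replace (q ++ j0 :: r) with ((q ++ [j0]) ++ r) by (rewrite <- app_assoc; reflexivity).
      apply HW; auto. change (Nat.even (S (length r)) = true) in He. rewrite Nat.even_succ in He.
      auto.
Qed.

Lemma steps_reach_whites : forall T,
  (forall p r, r <> [] -> Nat.even (length r) = true -> sub T r <> None ->
      In (p ++ r) (map s_to (wsteps T p))) /\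
  (forall q par r, Nat.odd (length r) = true -> sub T r <> None ->
      In (q ++ r) (map s_to (bsteps T q par))).
Proof.
  apply tree_ind2. intros ts H. split.
  - intros p [|i r] Hne He Hs; [congruence|]. simpl in Hs.
    destruct (nth_error ts i) as [c|] eqn:En; [|congruence].
    assert (Hc : In c ts) by (eapply nth_error_In; eauto).
    destruct (proj1 (Forall_forall _ _) H c Hc) as [_ HB].
    change (Nat.even (S (length r)) = true) in He. rewrite Nat.even_succ in He.
    destruct (proj1 (in_map_iff _ _ _) (HB (p ++ [i]) p r He Hs)) as [tr [Htr Hin]].
    apply in_map_iff. exists tr. split.
    + rewrite Htr, <- app_assoc. reflexivity.
    + rewrite wsteps_node. apply (in_child_steps p c ts 0 i); auto.
  - intros q par [|j r] Ho Hs; [discriminate|]. simpl in Hs.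
    destruct (nth_error ts j) as [c|] eqn:En; [|congruence].
    simpl bsteps. destruct r as [|x r'].
    + apply (child_in_round q par c ts 0 j par En).
    + assert (Hc : In c ts) by (eapply nth_error_In; eauto).
      destruct (proj1 (Forall_forall _ _) H c Hc) as [HW _].
      change (Nat.odd (S (length (x :: r'))) = true) in Ho. rewrite Nat.odd_succ in Ho.
      destruct (proj1 (in_map_iff _ _ _) (HW (q ++ [j]) (x :: r') ltac:(discriminate) Ho Hs)) as
          [tr [Htr Hin]].
      apply in_map_iff. exists tr. split.
      * rewrite Htr, <- app_assoc. reflexivity.
      * apply (in_round q par c ts 0 j); auto.
Qed.

Lemma bnbr_white t u ts j : Nat.odd (length u) = true -> sub t u = Some (Node ts) ->
  (j <= S (length ts))%nat ->
  sub t (bnbr u ts j) <> None /\ Nat.even (length (bnbr u ts j)) = true.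
Proof.
  intros Ho Hs Hj. unfold bnbr.
  destruct ((j =? 0)%nat || (j =? S (length ts))%nat) eqn:E.
  - destruct u as [|x u'] using rev_ind; [discriminate|]. rewrite removelast_last.
    rewrite sub_app in Hs. split.
    + destruct (sub t u'); congruence.
    + rewrite length_app in Ho. simpl in Ho. rewrite Nat.add_1_r, Nat.odd_succ in Ho. auto.
  - apply orb_false_iff in E as [E1 E2]. apply Nat.eqb_neq in E1, E2. split.
    + rewrite sub_app, Hs. simpl. destruct (nth_error ts (j - 1)) eqn:En; [discriminate|].
      apply nth_error_None in En. lia.
    + rewrite length_app. simpl. apply even_S_of_odd; auto.
Qed.

End BlackNeighbours.

Section ContourCorrespondence.
Local Open Scope Z_scope.

Definition step0 : step := Step [] [] [].

Lemma nth_visits (L : list step) k d : (k < length L)%nat ->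
  nth (2 * k) (visits L) d = s_black (nth k L step0) /\
      nth (2 * k + 1) (visits L) d = s_to (nth k L step0).
Proof.
  revert k; induction L as [|tr L IH]; intros k Hk; simpl in Hk; [lia|].
  destruct k as [|k]; [simpl; auto|].
  replace (2 * S k)%nat with (S (S (2 * k))) by lia.
  replace (S (S (2 * k)) + 1)%nat with (S (S (2 * k + 1))) by lia.
  simpl. apply IH. lia.
Qed.

Definition whites (t : tree) : list (list nat) := [] :: map s_to (wsteps t []).

Lemma wsteps_length t : length (wsteps t []) = edges t.
Proof. apply (proj1 (steps_length t)). Qed.

Lemma map_nth_seq {A : Type} (L : list A) d : map (fun m => nth m L d) (seq 0 (length L)) = L.
Proof.
  enough (forall pre, map (fun m => nth m (pre ++ L) d) (seq (length pre) (length L)) = L)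
    by exact (H []).
  induction L as [|x L IH]; intro pre; [reflexivity|]. simpl.
  rewrite nth_middle. f_equal.
  replace (pre ++ x :: L) with ((pre ++ [x]) ++ L) by (rewrite <- app_assoc; reflexivity).
  replace (S (length pre)) with (length (pre ++ [x])) by (rewrite length_app; simpl; lia).
  apply IH.
Qed.

Lemma cseq_eq t : cseq t = whites t.
Proof.
  unfold cseq. rewrite <- (map_nth_seq (whites t) []).
  replace (length (whites t)) with (S (edges t)) by
      (unfold whites; simpl; rewrite length_map, wsteps_length; auto).
  apply map_ext_in. intros m Hm. apply in_seq in Hm.
  unfold cstep. rewrite (proj1 (contour_steps t)). unfold whites.
  destruct m as [|m]; [reflexivity|].
  replace (2 * S m)%nat with (S (2 * m + 1)) by lia.
  assert (Hm' : (m < length (wsteps t []))%nat) by (rewrite wsteps_length; lia).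
  set (k := (2 * m + 1)%nat). simpl nth. subst k.
  rewrite (proj2 (nth_visits _ m [] Hm')).
  symmetry. exact (map_nth s_to (wsteps t []) step0 m).
Qed.

Lemma bsum_seq (L : list step) y v : length y = length L ->
  fold_right Z.add 0 (map (fun i => if path_dec (s_black (nth (i - 1) L step0)) v
      then nth (i - 1) y 0 else 0) (seq 1 (length L))) = bsum L y v.
Proof.
  revert y; induction L as [|tr L IH]; intros [|z y] Hl; simpl in Hl; try lia; [reflexivity|].
  simpl length. rewrite <- cons_seq. simpl map. simpl fold_right. simpl bsum. f_equal.
  rewrite <- seq_shift, map_map. rewrite <- (IH y) by lia. f_equal. apply map_ext_in.
  intros i Hi. apply in_seq in Hi. replace (S i - 1)%nat with (S (i - 1)) by lia. reflexivity.
Qed.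

Lemma blocksum_eq t xi v : length xi = edges t -> blocksum t xi v = bsum (wsteps t []) xi v.
Proof.
  intros Hl. unfold blocksum. rewrite <- bsum_seq by (rewrite wsteps_length; auto).
  rewrite wsteps_length.
  f_equal. apply map_ext_in. intros i Hi. apply in_seq in Hi.
  unfold cstep. rewrite (proj1 (contour_steps t)).
  replace (2 * i - 1)%nat with (S (2 * (i - 1))) by lia.
  assert (Hi' : (i - 1 < length (wsteps t []))%nat) by (rewrite wsteps_length; lia).
  set (k := (2 * (i - 1))%nat). simpl nth. subst k.
  rewrite (proj1 (nth_visits _ (i - 1) [] Hi')). reflexivity.
Qed.

Lemma around_top t tr : In tr (wsteps t []) -> around t tr.
Proof. intros H. apply (proj1 (steps_around t t) []); auto. Qed.

Lemma cond_iff t xi : length xi = edges t ->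
  (cond_event t xi = true <-> forall v, bsum (wsteps t []) xi v = 0).
Proof.
  intros Hl. unfold cond_event. rewrite forallb_forall. split.
  - intros H v. destruct (in_dec (path_dec) v (map s_black (wsteps t []))) as [Hin|Hn].
    + apply in_map_iff in Hin as [tr [<- Htr]].
      destruct (around_top t tr Htr) as [ts [j [Ho _]]].
      assert (Hc : In (s_black tr) (contour t [])).
      { rewrite (proj1 (contour_steps t)). right. unfold visits. apply in_flat_map. exists tr.
        split; simpl; auto. }
      specialize (H _ Hc). rewrite Ho in H. apply Z.eqb_eq in H. rewrite <- blocksum_eq; auto.
    + apply bsum_avoiding. intros tr Htr Heq. apply Hn. apply in_map_iff. eauto.
  - intros H v _. destruct (Nat.odd (length v)); auto. apply Z.eqb_eq. rewrite blocksum_eq; auto.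
Qed.

End ContourCorrespondence.

Section Labelings.
Local Open Scope Z_scope.

Definition sumZ (l : list Z) : Z := fold_right Z.add 0 l.

Lemma fits_walk l L y : fits l L y -> forall s a, chained s L ->
  psums a y = map (fun v => l v - l s + a) (s :: map s_to L).
Proof.
  induction 1 as [|tr z L y Hz _ IH]; intros s a Hc; [simpl; f_equal; lia|].
  destruct Hc as [Hf Hc]. subst s. simpl. f_equal; [lia|].
  rewrite (IH _ (a + z) Hc). simpl. f_equal; [lia|]. apply map_ext. intro v. lia.
Qed.

Lemma fits_sum l L y : fits l L y -> forall s, chained s L -> sumZ y = l (chain_end s L) - l s.
Proof.
  induction 1 as [|tr z L y Hz _ IH]; intros s Hc; [simpl; lia|].
  destruct Hc as [Hf Hc]. subst s. simpl. rewrite (IH _ Hc). lia.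
Qed.

Lemma chained_top t : chained [] (wsteps t []) /\ chain_end [] (wsteps t []) = [].
Proof. apply (proj1 (steps_chained t)). Qed.

Lemma walk_fits t l y : fits l (wsteps t []) y -> walk y = map (fun v => l v - l []) (whites t).
Proof.
  intros H. unfold walk. rewrite (fits_walk _ _ _ H [] 0 (proj1 (chained_top t))).
  unfold whites. apply map_ext. intro; lia.
Qed.

Lemma fits_of_cond t y : length y = edges t -> cond_event t y = true -> exists l,
  fits l (wsteps t []) y.
Proof.
  intros Hl Hc. apply (proj1 (fits_of_blocksums t)).
  - rewrite wsteps_length; auto.
  - apply cond_iff; auto.
Qed.

Fixpoint idx (v : list nat) (L : list (list nat)) : nat :=
  match L with [] => 0 | x :: L' => if path_dec x v then 0 else S (idx v L') end.

Lemma idx_spec v L : In v L -> (idx v L < length L)%nat /\ nth (idx v L) L [] = v.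
Proof.
  induction L as [|x L IH]; intros H; [contradiction|]. simpl.
  destruct (path_dec x v) as [e|ne]; [simpl; split; [lia|auto]|].
  destruct H as [->|H]; [congruence|]. destruct (IH H). simpl. split; [lia|auto].
Qed.

Definition whiteb (t : tree) (v : list nat) : bool :=
  (match sub t v with Some _ => true | None => false end && Nat.even (length v))%bool.

Lemma whiteb_spec t v : whiteb t v = true <-> is_white t v.
Proof.
  unfold whiteb, is_white, is_vertex. destruct (sub t v); simpl; split; intuition congruence.
Qed.

Definition labeling (t : tree) (xi : list Z) (v : list nat) : Z :=
  if whiteb t v then nth (idx v (whites t)) (walk xi) 0 else 0.

Lemma whites_white t v : In v (whites t) -> whiteb t v = true.
Proof.
  intros [<-|H]; [reflexivity|]. apply in_map_iff in H as [tr [<- Htr]].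
  destruct (around_top t tr Htr) as [ts [j [Ho [Hs [Hj [_ Hth]]]]]].
  apply whiteb_spec. rewrite Hth. destruct (bnbr_white t _ _ (S j) Ho Hs) as [H1 H2]; [lia|].
  split; auto.
Qed.

Lemma white_in_whites t v : whiteb t v = true -> In v (whites t).
Proof.
  intros E. apply whiteb_spec in E as [Hs He]. destruct v as [|x v']; [left; auto|right].
  exact (proj1 (steps_reach_whites t) [] (x :: v') ltac:(discriminate) He Hs).
Qed.

Lemma from_in_whites t tr : In tr (wsteps t []) -> In (s_from tr) (whites t).
Proof.
  assert (G : forall L s, chained s L -> forall tr, In tr L ->
      s_from tr = s \/ In (s_from tr) (map s_to L)).
  { induction L as [|tr' L IH]; intros s Hc tr0 Hin; [contradiction|].
    destruct Hc as [Hf Hc]. destruct Hin as [<-|Hin]; [left; auto|].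
    destruct (IH _ Hc _ Hin) as [H|H]; right; simpl; auto. }
  intros Htr. destruct (G _ _ (proj1 (chained_top t)) _ Htr) as [H|H]; [left; auto|right; auto].
Qed.

Lemma labeling_fits t xi l : fits l (wsteps t []) xi -> forall v, In v (whites t) ->
  labeling t xi v = l v - l [].
Proof.
  intros Hf v Hv. unfold labeling. rewrite whites_white by auto. rewrite (walk_fits _ _ _ Hf).
  destruct (idx_spec _ _ Hv) as [H1 H2].
  assert (E : nth (idx v (whites t)) (map (fun v => l v - l []) (whites t)) 0 =
              (fun v => l v - l []) (nth (idx v (whites t)) (whites t) [])).
  { rewrite <- (map_nth (fun v => l v - l []) (whites t) [] (idx v (whites t))). apply nth_indep.
    rewrite length_map; auto. }
  rewrite E, H2. reflexivity.
Qed.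

Lemma labeling_whites t xi : length xi = edges t -> cond_event t xi = true ->
  map (labeling t xi) (whites t) = walk xi.
Proof.
  intros Hl Hc. destruct (fits_of_cond t xi Hl Hc) as [l Hf]. rewrite (walk_fits _ _ _ Hf).
  apply map_ext_in. apply labeling_fits; auto.
Qed.

Lemma fits_In l L y tr : fits l L y -> In tr L -> In (l (s_to tr) - l (s_from tr)) y.
Proof.
  induction 1 as [|tr' z L y Hz _ IH]; intros Hin; [contradiction|].
  destruct Hin as [<-|Hin]; [left; auto|right; auto].
Qed.

Definition ge_m1 (xi : list Z) : bool := forallb (fun z => -1 <=? z) xi.

Lemma labeling_admissible t xi : length xi = edges t -> ge_m1 xi = true -> cond_event t xi = true ->
  admissible t (labeling t xi).
Proof.
  intros Hl Ha Hc. destruct (fits_of_cond t xi Hl Hc) as [l Hf]. split; [|split].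
  - rewrite (labeling_fits t xi l Hf [] (or_introl eq_refl)). lia.
  - intros v Hv. unfold labeling. destruct (whiteb t v) eqn:E; auto. apply whiteb_spec in E.
    contradiction.
  - intros u ts Ho Hs w j Hj. unfold w.
    change (labeling t xi (bnbr u ts (S j)) >= labeling t xi (bnbr u ts j) - 1).
    assert (Hin := proj1 (steps_complete t) [] u ts Ho Hs j Hj). simpl in Hin.
    rewrite (labeling_fits t xi l Hf (bnbr u ts (S j))) by
        (right; apply in_map_iff; eexists; split; [|exact Hin]; reflexivity).
    rewrite (labeling_fits t xi l Hf (bnbr u ts j)) by (apply (from_in_whites t _ Hin)).
    assert (Hz := fits_In _ _ _ _ Hf Hin). simpl in Hz.
    unfold ge_m1 in Ha. rewrite forallb_forall in Ha. specialize (Ha _ Hz). apply Z.leb_le in Ha.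
    lia.
Qed.

Definition incrs (l : list nat -> Z) (L : list step) : list Z :=
  map (fun tr => l (s_to tr) - l (s_from tr)) L.

Lemma fits_incrs l L : fits l L (incrs l L).
Proof. induction L; constructor; auto. Qed.

Lemma incrs_length t l : length (incrs l (wsteps t [])) = edges t.
Proof. unfold incrs. rewrite length_map. apply wsteps_length. Qed.

Lemma incrs_cond t l : cond_event t (incrs l (wsteps t [])) = true.
Proof.
  apply cond_iff; [apply incrs_length|]. intro v.
  rewrite <- (fits_bincr _ _ _ v (fits_incrs l _)). apply (proj1 (bincr_steps t)).
Qed.

Lemma incrs_ge_m1 t l : admissible t l -> ge_m1 (incrs l (wsteps t [])) = true.
Proof.
  intros [_ [_ Hadm]]. unfold ge_m1, incrs. apply forallb_forall. intros z Hz.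
  apply in_map_iff in Hz as [tr [<- Htr]].
  destruct (around_top t tr Htr) as [ts [j [Ho [Hs [Hj [Hf Hth]]]]]].
  specialize (Hadm _ ts Ho Hs j Hj). cbv zeta in Hadm.
  change (l (bnbr (s_black tr) ts (S j)) >= l (bnbr (s_black tr) ts j) - 1) in Hadm.
  apply Z.leb_le. rewrite Hf, Hth. lia.
Qed.

Lemma labeling_incrs t l : admissible t l -> labeling t (incrs l (wsteps t [])) = l.
Proof.
  intros [Hroot [Hzero _]]. apply functional_extensionality. intro v.
  destruct (whiteb t v) eqn:E.
  - rewrite (labeling_fits t _ l (fits_incrs l _) v (white_in_whites t v E)). lia.
  - unfold labeling. rewrite E. symmetry. apply Hzero.
    intro Hw. apply whiteb_spec in Hw. congruence.
Qed.

Lemma cseq_labeling t xi : length xi = edges t -> cond_event t xi = true ->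
  map (labeling t xi) (cseq t) = walk xi.
Proof. intros Hl Hc. rewrite cseq_eq. apply labeling_whites; auto. Qed.

End Labelings.

Section Counting.
Local Open Scope R_scope.

Lemma range_in N z : In z (map (fun k => (Z.of_nat k - Z.of_nat N)%Z) (seq 0 (2 * N + 1))) <->
  (- Z.of_nat N <= z <= Z.of_nat N)%Z.
Proof.
  rewrite in_map_iff. split.
  - intros [k [<- Hk]]. apply in_seq in Hk. lia.
  - intros Hz. exists (Z.to_nat (z + Z.of_nat N)). split; [lia|]. apply in_seq. lia.
Qed.

Lemma box_in n N xi : In xi (box n N) <->
  length xi = n /\ Forall (fun z => (- Z.of_nat N <= z <= Z.of_nat N)%Z) xi.
Proof.
  revert xi; induction n as [|n IH]; intro xi; simpl.
  - split; [intros [<-|[]]; split; auto|]. intros [Hl _]. destruct xi; [left; auto|discriminate].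
  - rewrite in_flat_map. split.
    + intros [z [Hz Hx]]. apply range_in in Hz. apply in_map_iff in Hx as [xi' [<- Hx]].
      apply IH in Hx as [Hl Hf]. simpl. split; auto.
    + intros [Hl Hf]. destruct xi as [|z xi']; [discriminate|]. inversion Hf; subst.
      exists z. split; [apply range_in; auto|]. apply in_map. apply IH. simpl in Hl. split; auto.
Qed.

Lemma nodup_fm (R : list Z) (B : list (list Z)) : NoDup R -> NoDup B ->
  NoDup (flat_map (fun z => map (cons z) B) R).
Proof.
  induction 1 as [|z R Hz HR IH]; intros HB; simpl; [constructor|].
  apply NoDup_app.
  - apply NoDup_map_NoDup_ForallPairs; auto. intros a b _ _ H. injection H; auto.
  - apply IH; auto.
  - intros a Ha Hb. apply in_map_iff in Ha as [a' [<- _]]. apply in_flat_map in Hb as [z' [Hz' Hb]].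
    apply in_map_iff in Hb as [b' [Hb _]]. injection Hb as -> _. contradiction.
Qed.

Lemma box_nodup n N : NoDup (box n N).
Proof.
  induction n as [|n IH]; simpl; [repeat constructor; auto|].
  apply nodup_fm; auto. apply NoDup_map_NoDup_ForallPairs; [|apply seq_NoDup].
  intros a b _ _ H. lia.
Qed.

Lemma box_mono n N M : (N <= M)%nat -> incl (box n N) (box n M).
Proof.
  intros H xi Hx. apply box_in in Hx as [Hl Hf]. apply box_in. split; auto.
  eapply Forall_impl; [|exact Hf]. intros z Hz. simpl in Hz. lia.
Qed.

Lemma pmf_zero xi : ge_m1 xi = false -> pmf xi = 0.
Proof.
  induction xi as [|z xi IH]; simpl; intros H; [discriminate|].
  apply andb_false_iff in H as [H|H].
  - unfold pxi. apply Z.leb_gt in H. replace (z <? -1)%Z with true by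
      (symmetry; apply Z.ltb_lt; lia). ring.
  - rewrite IH; auto. ring.
Qed.

Fixpoint sumN (xi : list Z) : nat :=
  match xi with [] => 0%nat | z :: r => (Z.to_nat (z + 2) + sumN r)%nat end.

Lemma pmf_pow xi : ge_m1 xi = true -> pmf xi = (/ 2) ^ (sumN xi) /\
   Z.of_nat (sumN xi) = (sumZ xi + 2 * Z.of_nat (length xi))%Z.
Proof.
  induction xi as [|z xi IH]; simpl; intros H; [split; [reflexivity|lia]|].
  apply andb_true_iff in H as [H1 H2]. destruct (IH H2) as [IH1 IH2]. apply Z.leb_le in H1.
  split.
  - unfold pxi. replace (z <? -1)%Z with false by (symmetry; apply Z.ltb_ge; lia).
    rewrite IH1, pow_add. reflexivity.
  - unfold sumZ in *. simpl. lia.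
Qed.

Lemma pmf_balanced xi : ge_m1 xi = true -> sumZ xi = 0%Z -> pmf xi = (/ 2) ^ (2 * length xi).
Proof.
  intros H1 H2. destruct (pmf_pow xi H1) as [E1 E2]. rewrite E1. f_equal. lia.
Qed.

Lemma sumZ_app l1 l2 : sumZ (l1 ++ l2) = (sumZ l1 + sumZ l2)%Z.
Proof.
  unfold sumZ. rewrite fold_right_app. induction l1; simpl; [lia|]. unfold sumZ in IHl1. lia.
Qed.

Lemma sum_ge l : ge_m1 l = true -> (sumZ l >= - Z.of_nat (length l))%Z.
Proof.
  induction l as [|z l IH]; simpl; intros H; [unfold sumZ; simpl; lia|].
  apply andb_true_iff in H as [H1 H2]. apply Z.leb_le in H1. specialize (IH H2). unfold sumZ in *.
  simpl. lia.
Qed.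

Lemma ge_m1_app l1 l2 : ge_m1 (l1 ++ l2) = true -> ge_m1 l1 = true /\ ge_m1 l2 = true.
Proof. unfold ge_m1. rewrite forallb_app. apply andb_true_iff. Qed.

Lemma balanced_in_box xi : ge_m1 xi = true -> sumZ xi = 0%Z -> In xi (box (length xi) (length xi)).
Proof.
  intros Ha Hs. apply box_in. split; auto. apply Forall_forall. intros z Hz.
  destruct (in_split _ _ Hz) as [l1 [l2 ->]].
  destruct (ge_m1_app _ _ Ha) as [A1 A2]. simpl in A2. apply andb_true_iff in A2 as [A3 A2].
  apply Z.leb_le in A3. rewrite sumZ_app in Hs. simpl in Hs. unfold sumZ in Hs at 2. simpl in Hs.
  fold (sumZ l2) in Hs. assert (S1 := sum_ge _ A1). assert (S2 := sum_ge _ A2).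
  rewrite length_app. simpl. lia.
Qed.

(* On the conditioning event the increments sum to zero (the contour walk is closed). *)
Lemma cond_sum_zero t xi : length xi = edges t -> cond_event t xi = true -> sumZ xi = 0%Z.
Proof.
  intros Hl Hc. destruct (fits_of_cond t xi Hl Hc) as [l Hf].
  rewrite (fits_sum _ _ _ Hf [] (proj1 (chained_top t))), (proj2 (chained_top t)). lia.
Qed.

Lemma cond_in_box t xi : length xi = edges t -> ge_m1 xi = true -> cond_event t xi = true ->
  In xi (box (edges t) (edges t)).
Proof.
  intros Hl Ha Hc. rewrite <- Hl. apply balanced_in_box; auto. apply (cond_sum_zero t); auto.
Qed.

Definition count_box (n : nat) (A : list Z -> bool) : nat :=
  length (filter (fun xi => A xi && ge_m1 xi) (box n n)).

Lemma sum_const_pmf (A : list Z -> bool) L c :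
  (forall xi, In xi L -> A xi = true -> ge_m1 xi = true -> pmf xi = c) ->
  fold_right Rplus 0 (map (fun xi => if A xi then pmf xi else 0) L) =
  c * INR (length (filter (fun xi => A xi && ge_m1 xi) L)).
Proof.
  induction L as [|xi L IH]; intros H; [simpl; ring|].
  cbn [map fold_right]. rewrite IH by (intros; apply H; auto; right; auto).
  cbn [filter]. destruct (A xi) eqn:EA; destruct (ge_m1 xi) eqn:EG; cbn [andb length].
  - rewrite H; auto; [|left; auto]. rewrite S_INR. ring.
  - rewrite pmf_zero; auto. ring.
  - ring.
  - ring.
Qed.

(* Once the box contains the conditioning event, the boxes exhaust it: the count of
   vectors of an event inside it no longer grows. *)
Lemma count_box_stable t (A : list Z -> bool) N :
  (forall xi, A xi = true -> cond_event t xi = true) -> (edges t <= N)%nat ->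
  length (filter (fun xi => A xi && ge_m1 xi) (box (edges t) N)) = count_box (edges t) A.
Proof.
  intros HA HN. unfold count_box.
  apply Nat.le_antisymm; apply NoDup_incl_length; try (apply NoDup_filter, box_nodup).
  - intros xi Hx. apply filter_In in Hx as [Hx Hp]. apply filter_In. split; auto.
    apply andb_true_iff in Hp as [H1 H2]. apply box_in in Hx as [Hl _].
    apply cond_in_box; auto.
  - intros xi Hx. apply filter_In in Hx as [Hx Hp]. apply filter_In. split; auto.
    apply (box_mono _ (edges t) N); auto.
Qed.

Lemma prob_cond t (A : list Z -> bool) : (forall xi, A xi = true -> cond_event t xi = true) ->
  prob (edges t) A ((/ 2) ^ (2 * edges t) * INR (count_box (edges t) A)).
Proof.
  intros HA. unfold prob, Un_cv. intros eps He. exists (edges t). intros N HN.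
  rewrite (sum_const_pmf A _ ((/ 2) ^ (2 * edges t))).
  - rewrite (count_box_stable t A N HA HN), Rdist_eq. lra.
  - intros xi Hx H1 H2. apply box_in in Hx as [Hl _]. rewrite <- Hl.
    apply pmf_balanced; auto. apply (cond_sum_zero t); auto.
Qed.

Lemma psums_inj a y1 y2 : psums a y1 = psums a y2 -> y1 = y2.
Proof.
  revert a y2; induction y1 as [|z1 y1 IH]; intros a [|z2 y2] H; simpl in H; auto.
  - injection H as H. destruct y2; discriminate.
  - injection H as H. destruct y1; discriminate.
  - injection H as H. assert (Ez : z1 = z2).
    { destruct y1, y2; simpl in H; injection H; intros; lia. }
    subst z2. f_equal. apply (IH (a + z1)%Z); auto.
Qed.

(* The bijection [xi |-> labeling t xi] between the counted vectors of an event [P]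
   inside the conditioning event and the admissible labelings satisfying the
   corresponding property [Q]; its inverse is [incrs]. *)
Lemma card_labelings t (P : list Z -> bool) (Q : (list nat -> Z) -> Prop) :
  (forall xi, P xi = true -> cond_event t xi = true) ->
  (forall xi, length xi = edges t -> ge_m1 xi = true -> cond_event t xi = true ->
     (P xi = true <-> Q (labeling t xi))) ->
  has_card (fun l => admissible t l /\ Q l) (count_box (edges t) P).
Proof.
  intros HP HQ. unfold count_box.
  exists (map (labeling t) (filter (fun xi => P xi && ge_m1 xi) (box (edges t) (edges t)))).
  split; [|split; [apply length_map|]].
  - apply NoDup_map_NoDup_ForallPairs; [|apply NoDup_filter, box_nodup].
    intros a b Ha Hb Hab.
    apply filter_In in Ha as [Ha Pa]. apply filter_In in Hb as [Hb Pb].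
    apply andb_true_iff in Pa as [Pa _]. apply andb_true_iff in Pb as [Pb _].
    apply box_in in Ha as [La _]. apply box_in in Hb as [Lb _].
    apply (psums_inj 0%Z). fold (walk a) (walk b).
    rewrite <- (labeling_whites t a), <- (labeling_whites t b); auto. rewrite Hab. reflexivity.
  - intro l. rewrite in_map_iff. split.
    + intros [xi [<- Hx]]. apply filter_In in Hx as [Hx Px]. apply andb_true_iff in Px as [Px Ax].
      apply box_in in Hx as [Lx _]. split; [apply labeling_admissible; auto|]. apply HQ; auto.
    + intros [Hadm Hq]. exists (incrs l (wsteps t [])).
      split; [apply labeling_incrs; auto|].
      assert (Hl := incrs_length t l). assert (Hc := incrs_cond t l).
      assert (Ha := incrs_ge_m1 t l Hadm).
      apply filter_In. split; [apply cond_in_box; auto|].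
      apply andb_true_iff. split; auto. apply HQ; auto. rewrite labeling_incrs; auto.
Qed.

(* The conditioning event is non-empty: it contains the increments of the zero labeling. *)
Lemma count_cond_pos t : (0 < count_box (edges t) (cond_event t))%nat.
Proof.
  set (xi0 := incrs (fun _ => 0%Z) (wsteps t [])).
  assert (Hge : ge_m1 xi0 = true).
  { apply forallb_forall. intros z Hz. apply in_map_iff in Hz as [tr [<- _]]. reflexivity. }
  assert (Hin : In xi0 (filter (fun xi => cond_event t xi && ge_m1 xi) (box (edges t) (edges t)))).
  { assert (Hcond : cond_event t xi0 = true) by apply incrs_cond.
    apply filter_In. rewrite Hcond, Hge.
    split; [apply cond_in_box; auto; apply incrs_length|reflexivity]. }
  unfold count_box. destruct (filter _ _); [contradiction|]. simpl. lia.
Qed.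

Lemma has_card_ext {A : Type} (P P' : A -> Prop) k : (forall a, P a <-> P' a) -> has_card P k ->
  has_card P' k.
Proof.
  intros H [s [H1 [H2 H3]]]. exists s. split; auto. split; auto. intro a. rewrite H3. apply H.
Qed.

End Counting.

(* Both probabilities are [2^(-2n)] times the
   corresponding counts, by [prob_cond] and the bijection [card_labelings]. *)
Theorem mainTheorem3 (n : nat) (t : tree) (Hn : edges t = n) :
  exists NL : nat,
    has_card (admissible t) NL /\ (0 < NL)%nat /\
  exists PE : R,
    prob n (cond_event t) PE /\ 0 < PE /\
  forall x : list Z, length x = S n ->
    exists (K : nat) (PX : R),
      has_card (fun l => admissible t l /\ map l (cseq t) = x) K /\
      prob n (fun xi => andb (list_Z_eqb (walk xi) x) (cond_event t xi)) PX /\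
      PX / PE = INR K / INR NL.
Proof.
  subst n. set (c := (/ 2) ^ (2 * edges t)).
  assert (Hc : 0 < c) by (apply pow_lt; lra).
  set (NL := count_box (edges t) (cond_event t)).
  assert (HNL : (0 < NL)%nat) by apply count_cond_pos.
  exists NL. split.
  { apply (has_card_ext (fun l => admissible t l /\ True)); [tauto|].
    apply card_labelings; auto. tauto. }
  split; [exact HNL|]. exists (c * INR NL).
  split; [apply prob_cond; auto|].
  split; [apply Rmult_lt_0_compat; auto; apply lt_0_INR; exact HNL|].
  intros x _. set (Ax := fun xi => (list_Z_eqb (walk xi) x && cond_event t xi)%bool).
  assert (HAx : forall xi, Ax xi = true -> cond_event t xi = true).
  { intros xi H. apply andb_true_iff in H. tauto. }
  exists (count_box (edges t) Ax), (c * INR (count_box (edges t) Ax)). split; [|split].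
  - apply card_labelings; auto. intros xi Hl _ Hcond.
    unfold Ax. rewrite cseq_labeling, Hcond, andb_true_r by auto.
    unfold list_Z_eqb. destruct (list_eq_dec Z.eq_dec (walk xi) x); split; congruence.
  - apply prob_cond; auto.
  - field. split; [|lra]. apply not_0_INR. lia.
Qed.
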